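(* Let $a_1,\dots,a_n$ be a sequence of positive integers of one of the following eleven types: (1) $a_1$ with $a_1\ge2$; (2) $1,a_2$ with $a_2\ge2$; (3) $a_1,1$ with $a_1\ge2$; (4) $1,1,a_3$ with $a_3\ge2$; (5) $a_1,1,1$ with $a_1\ge2$; (6) $1,1,1,a_4$ with $a_4\ge2$; (7) $1,a_2,1,1$ with $a_2\ge2$; (8) $1,1,a_3,1$ with $a_3\ge2$; (9) $1,1,a_3,1,1$ with $a_3\ge2$; (10) $1,a_2,1,a_4,1$ with $a_2,a_4\ge2$; (11) $1,1,a_3,1,a_5,1$ with $a_3,a_5\ge2$. Let $T(0)=1$, $T(1)=a_1$, $T(i+1)=a_{i+1}T(i)+T(i-1)$. Then $V(a_1,\dots,a_n)\le T(n)$.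
   Context: $V(a_1,\dots,a_n)=\prod_{i=1}^n\frac{a_i+2}{2}$. *)

From mathcomp Require Import all_boot all_order all_algebra.
Set Implicit Arguments. Unset Strict Implicit. Unset Printing Implicit Defensive.
Import Order.TTheory GRing.Theory Num.Theory.

(* The sequence a_1,...,a_n is the list a, with a_i = nth 0 a (i-1). *)

Fixpoint T (a : seq nat) (i : nat) : nat :=
  match i with
  | 0 => 1
  | i'.+1 =>
      match i' with
      | 0 => nth 0 a 0
      | j.+1 => nth 0 a i' * T a i' + T a j
      end
  end.

Definition V (a : seq nat) : rat :=
  (\prod_(x <- a) ((x%:R + 2) / 2))%R.

Definition admissible (a : seq nat) : Prop :=
  (exists a1, 2 <= a1 /\ a = [:: a1]) \/
  (exists a2, 2 <= a2 /\ a = [:: 1; a2]) \/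
  (exists a1, 2 <= a1 /\ a = [:: a1; 1]) \/
  (exists a3, 2 <= a3 /\ a = [:: 1; 1; a3]) \/
  (exists a1, 2 <= a1 /\ a = [:: a1; 1; 1]) \/
  (exists a4, 2 <= a4 /\ a = [:: 1; 1; 1; a4]) \/
  (exists a2, 2 <= a2 /\ a = [:: 1; a2; 1; 1]) \/
  (exists a3, 2 <= a3 /\ a = [:: 1; 1; a3; 1]) \/
  (exists a3, 2 <= a3 /\ a = [:: 1; 1; a3; 1; 1]) \/
  (exists a2 a4, 2 <= a2 /\ 2 <= a4 /\ a = [:: 1; a2; 1; a4; 1]) \/
  (exists a3 a5, 2 <= a3 /\ 2 <= a5 /\ a = [:: 1; 1; a3; 1; a5; 1]).

From mathcomp Require Import all_boot all_order all_algebra.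
From mathcomp Require Import zify.
Import Order.TTheory GRing.Theory Num.Theory.

(* Multiplying by 2^n clears the denominators of V, so the bound becomes the
   inequality prod_i (a_i + 2) <= 2^n T(n) between natural numbers. For each of
   the eleven shapes both sides are polynomials in the at most two entries
   a_i >= 2, and after writing a_i = 2 + b_i their difference has nonnegative
   coefficients. *)

Lemma V_cons (x : nat) (s : seq nat) : V (x :: s) = ((x%:R + 2) / 2 * V s)%R.
Proof. by rewrite /V big_cons. Qed.

Lemma V_mul_exp2 (a : seq nat) :
  (V a * 2 ^+ size a = (\prod_(x <- a) (x + 2))%:R)%R.
Proof.
elim: a => [|x s IHs]; first by rewrite /V !big_nil mulr1.
by rewrite V_cons big_cons natrM natrD -IHs exprS mulrACA divfK.
Qed.

Lemma V_le_nat (a : seq nat) (m : nat) :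
  \prod_(x <- a) (x + 2) <= 2 ^ size a * m -> (V a <= m%:R)%R.
Proof.
move=> le_prod.
rewrite -(@ler_pM2r _ (2 ^+ size a)) ?exprn_gt0 // V_mul_exp2.
by rewrite -natrX -natrM ler_nat mulnC.
Qed.

Theorem lemma3p4 (a : seq nat) :
  admissible a -> (V a <= (T a (size a))%:R)%R.
Proof.
move=> adm; repeat destruct adm as [adm|adm].
all: first [destruct adm as [x [y [hx [hy ->]]]] | destruct adm as [x [hx ->]]].
all: apply: V_le_nat; rewrite /= !big_cons big_nil /=; nia.
Qed.
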